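(* Let $\varphi\colon (A,m,K)\to (B,n,L)$ and $\psi\colon B\to C$ be local homomorphisms of noetherian local rings. Let $\psi_{mB}\colon B/mB\to C/mC$ be the induced map and $\pi_{mB}\colon B\to B/mB$, $\pi_{mC}\colon C\to C/mC$ the canonical surjections. (1) The following are equivalent: (i) $\psi\circ\varphi$ is basically regular; (ii) $\varphi$ is basically regular and $\operatorname{rd}(\psi)=\operatorname{rd}(\psi_{mB})$; (iii) $\varphi$ is basically regular and $\operatorname{rd}(\pi_{mB})=\operatorname{rd}(\pi_{mC})$. (2) $\psi$ is basically regular if and only if $\psi_{mB}$ is basically regular and $\operatorname{rd}(\psi\circ\varphi)=\operatorname{rd}(\varphi)$. (3) If $\varphi$ and $\psi$ are basically regular, then $\psi\circ\varphi$ is basically regular. (4) If $\varphi$ is surjective and $\psi\circ\varphi$ is basically regular, then $\varphi$ and $\psi$ are basically regular.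
   Context: All rings are commutative and noetherian with identity. A local homomorphism $\varphi\colon (A,m,K)\to(B,n,L)$ satisfies $\varphi(m)\subseteq n$. The regularity defect $\operatorname{rd}(\varphi)$ is the $L$-dimension of the kernel of the natural $L$-linear map $m/m^2\otimes_K L\to n/n^2$, $\bar x\otimes\bar b\mapsto \overline{\varphi(x)b}$; $\varphi$ is basically regular if for every minimal basis (minimal generating set) $x_1,\dots,x_r$ of $m$, the elements $\varphi(x_1),\dots,\varphi(x_r)$ are part of a minimal basis of $n$ (vacuously true if $A$ is a field). *)

From HB Require Import structures.
From mathcomp Require Import all_boot all_order all_algebra.
From Stdlib Require Import ClassicalEpsilon.
Set Implicit Arguments. Unset Strict Implicit. Unset Printing Implicit Defensive.
Import GRing.Theory.
Local Open Scope ring_scope.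

(* R-linear combination  sum_i c_i x_i  (entries of c beyond size x are ignored) *)
Definition lin_comb (R : comNzRingType) (c x : seq R) : R :=
  \sum_(i < size x) c`_i * x`_i.


Definition is_ideal {R : comNzRingType} (I : R -> Prop) : Prop :=
  [/\ I 0, (forall x y, I x -> I y -> I (x + y)) & (forall a x, I x -> I (a * x))].


Definition fin_gen {R : comNzRingType} (I : R -> Prop) : Prop :=
  exists g : seq R, forall z, I z <-> exists c : seq R, z = lin_comb c g.

Definition noetherian (R : comNzRingType) : Prop := forall I : R -> Prop, is_ideal I -> fin_gen I.

(* (R, M) is a local ring with maximal ideal M: M is a proper ideal and
   every element outside M is a unit, so M is the unique maximal ideal *)
Definition local_ring {R : comNzRingType} (M : R -> Prop) : Prop :=
  [/\ is_ideal M, ~ M 1 & forall x, ~ M x -> exists y, x * y = 1].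

Definition zero_ideal (R : comNzRingType) : R -> Prop := fun z => z = 0.
Arguments zero_ideal R : clear implicits.

Definition ideal_add {R : comNzRingType} (I J : R -> Prop) : R -> Prop :=
  fun z => exists u v, [/\ I u, J v & z = u + v].

Definition ideal_sq {R : comNzRingType} (M : R -> Prop) : R -> Prop :=
  fun z => exists a b : seq R, size a = size b /\
    (forall i, (i < size a)%N -> M a`_i /\ M b`_i) /\ z = lin_comb a b.

Definition ideal_ext {R S : comNzRingType} (f : R -> S) (M : R -> Prop) : S -> Prop :=
  fun z => exists (a : seq R) (b : seq S),
    (forall i, (i < size a)%N -> M a`_i) /\ z = lin_comb b (map f a).

Definition local_hom {R S : comNzRingType} (f : R -> S) (M : R -> Prop) (N : S -> Prop) : Prop :=
  forall x, M x -> N (f x).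

(* Convention: a local ring of the form R/I, with I contained in the
   maximal ideal M of R, is represented by the pair (I, M); its maximal
   ideal is M/I and its residue field is R/M.  All quotient rings used in
   the statement (B/mB, C/mC, and R itself with I = 0) are of this form. *)

(* the classes of the family y in N/Q are linearly independent over S/N *)
Definition lin_indep_mod (S : comNzRingType) (N Q : S -> Prop) (y : seq S) : Prop :=
  forall c : seq S, Q (lin_comb c y) -> forall i, (i < size y)%N -> N c`_i.


(* largest d with P d (used only for P bounded, as here by noetherianity) *)
Definition dimof (P : nat -> Prop) : nat :=
  epsilon (inhabits 0%N) (fun d => P d /\ forall k, P k -> (k <= d)%N).


(* dim_{R/M} of Mbar/Mbar^2 = M/(M^2 + I), for the local ring R/I *)
Definition cotan_dim {R : comNzRingType} (I M : R -> Prop) : nat :=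
  dimof (fun k => exists x : seq R, [/\ size x = k,
     (forall i, (i < k)%N -> M x`_i) &
     lin_indep_mod M (ideal_add (ideal_sq M) I) x]).

(* For the local map fbar : R/I -> S/J induced by f (f(I) in J),
   dimension over L = S/N of the image of  Mbar/Mbar^2 (x)_K L -> Nbar/Nbar^2,
   i.e. of the L-span of the classes of f(M) in N/(N^2 + J). *)
Definition image_dim {R S : comNzRingType} (f : R -> S) (M : R -> Prop) (J N : S -> Prop) : nat :=
  dimof (fun k => exists x : seq R, [/\ size x = k,
     (forall i, (i < k)%N -> M x`_i) &
     lin_indep_mod N (ideal_add (ideal_sq N) J) (map f x)]).

(* regularity defect of fbar : (R/I, M/I) -> (S/J, N/J): dimension of the
   kernel of  Mbar/Mbar^2 (x)_K L -> Nbar/Nbar^2, computed by rank-nullity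
   (dim_L (V (x)_K L) = dim_K V). *)
Definition reg_defect {R S : comNzRingType} (f : R -> S) (I M : R -> Prop) (J N : S -> Prop) : nat :=
  (cotan_dim I M - image_dim f M J N)%N.

Definition generates {R : comNzRingType} (I M : R -> Prop) (x : seq R) : Prop :=
  (forall i, (i < size x)%N -> M x`_i) /\
  forall z, M z -> exists c : seq R, I (z - lin_comb c x).

Definition min_basis {R : comNzRingType} (I M : R -> Prop) (x : seq R) : Prop :=
  generates I M x /\ forall x' : seq R, generates I M x' -> (size x <= size x')%N.

Definition basically_regular {R S : comNzRingType} (f : R -> S) (I M : R -> Prop) (J N : S -> Prop) : Prop :=
  forall x : seq R, min_basis I M x ->
    exists y : seq S, min_basis J N (map f x ++ y).

From HB Require Import structures.
From mathcomp Require Import all_boot all_order all_algebra.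
From mathcomp Require Import ring_quotient generic_quotient zify boolp.
From Stdlib Require Import ClassicalEpsilon.

Set Implicit Arguments. Unset Strict Implicit. Unset Printing Implicit Defensive.
Import GRing.Theory.
Local Open Scope ring_scope.

(** For a local map [f : (R, M) -> (S, N)] write [edim R] for the dimension of
    [M/M^2] and [r(f)] for the rank of the induced map [M/M^2 (x) L -> N/N^2], so
    that [rd(f) = edim R - r(f)] and [f] is basically regular iff [r(f) = edim R].
    Once the maximal ideals are finitely generated, every [N/(N^2 + J)] is a
    quotient of the coordinate space [L^d] over the residue field, minimal bases
    correspond (by Nakayama) to bases of that quotient, and all of these become
    matrix ranks.  Dividing [S] by the extended ideal [f(M)S] adds exactly the
    image of [f] to the relations, whence [r(g) = r(g mod f(M)) + r(g \o f)] for a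
    second local map [g : S -> T]; for [g = id] this reads
    [edim S = edim (S/f(M)S) + r(f)].  With [r(g \o f) <= r(f) <= edim R], and
    [edim (S/f(M)S) = 0] when [f] is onto, the four statements are linear
    arithmetic. *)

(** * Ideals and linear combinations *)

Section Ideals.
Variable R : comNzRingType.
Implicit Types (I M : R -> Prop) (a b c x : seq R).

Lemma ideal_sum I n (F : 'I_n -> R) :
  is_ideal I -> (forall i, I (F i)) -> I (\sum_(i < n) F i).
Proof. by case=> I0 ID _ IF; apply: big_ind. Qed.

Lemma ideal_lin_comb I c x :
  is_ideal I -> (forall i, (i < size x)%N -> I x`_i) -> I (lin_comb c x).
Proof. by move=> I_ideal Ix; apply: ideal_sum => // i; case: I_ideal => _ _ IM; apply/IM/Ix. Qed.

Lemma lin_comb0 x : lin_comb [::] x = 0.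
Proof. by rewrite /lin_comb big1 // => i _; rewrite nth_nil mul0r. Qed.

Lemma lin_comb_cat a1 a2 x1 x2 : size a1 = size x1 ->
  lin_comb (a1 ++ a2) (x1 ++ x2) = lin_comb a1 x1 + lin_comb a2 x2.
Proof.
move=> sa1; rewrite /lin_comb size_cat big_split_ord /=; congr (_ + _).
  by apply: eq_bigr => i _; rewrite !nth_cat sa1 ltn_ord.
by apply: eq_bigr => i _; rewrite !nth_cat sa1 ltnNge leq_addr /= addKn.
Qed.

Lemma lin_combZ r c x : lin_comb [seq r * z | z <- c] x = r * lin_comb c x.
Proof.
rewrite /lin_comb mulr_sumr; apply: eq_bigr => i _.
have [ic|ci] := ltnP i (size c); first by rewrite (nth_map 0) // mulrA.
by rewrite nth_default ?size_map // [c`_i]nth_default // !mul0r mulr0.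
Qed.

Lemma is_ideal_zero : is_ideal (zero_ideal R).
Proof. by split=> // [x y -> ->|r x ->]; rewrite ?addr0 ?mulr0. Qed.

Lemma is_ideal_add I J : is_ideal I -> is_ideal J -> is_ideal (ideal_add I J).
Proof.
move=> [I0 ID IM] [J0 JD JM]; split.
- by exists 0, 0; rewrite addr0.
- move=> _ _ [u1 [v1 [Iu1 Jv1 ->]]] [u2 [v2 [Iu2 Jv2 ->]]].
  by exists (u1 + u2), (v1 + v2); rewrite addrACA; split; [apply: ID | apply: JD |].
- move=> r _ [u [v [Iu Jv ->]]].
  by exists (r * u), (r * v); rewrite mulrDr; split; [apply: IM | apply: JM |].
Qed.

Lemma is_ideal_sq M : is_ideal M -> is_ideal (ideal_sq M).
Proof.
move=> [M0 MD MM]; split.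
- by exists [::], [::]; rewrite lin_comb0.
- move=> _ _ [a1 [x1 [s1 [Max1 ->]]]] [a2 [x2 [s2 [Max2 ->]]]].
  exists (a1 ++ a2), (x1 ++ x2); rewrite lin_comb_cat //.
  split; first by rewrite !size_cat s1 s2.
  split=> // i; rewrite size_cat !nth_cat -s1 => ilt.
  case: ifP => [/Max1 //|/negbT]; rewrite -leqNgt => le; apply: Max2.
  by rewrite ltn_subLR.
- move=> r _ [a [x [s [Max ->]]]].
  exists [seq r * z | z <- a], x; rewrite size_map lin_combZ; split=> //; split=> // i ia.
  by rewrite (nth_map 0) //; have [Ma Mx] := Max i ia; split=> //; apply: MM.
Qed.

Lemma ideal_sq_sub M z : is_ideal M -> ideal_sq M z -> M z.
Proof.
move=> M_ideal [a [b [sab [Mab ->]]]]; apply: ideal_lin_comb => // i.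
by rewrite -sab => /Mab [].
Qed.

End Ideals.

Lemma local_ring_ideal (R : comNzRingType) (M : R -> Prop) : local_ring M -> is_ideal M.
Proof. by case. Qed.

Lemma ideal_addl (R : comNzRingType) (I J : R -> Prop) :
  is_ideal J -> forall z, I z -> ideal_add I J z.
Proof. by case=> J0 _ _ z Iz; exists z, 0; rewrite addr0. Qed.

Lemma is_ideal_sq_add (R : comNzRingType) (M I : R -> Prop) :
  local_ring M -> is_ideal I -> is_ideal (ideal_add (ideal_sq M) I).
Proof. by move=> M_local; apply/is_ideal_add/is_ideal_sq/local_ring_ideal. Qed.

Lemma is_ideal_ext (R S : comNzRingType) (f : R -> S) (M : R -> Prop) :
  is_ideal (ideal_ext f M).
Proof.
split.
- by exists [::], [::]; rewrite lin_comb0.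
- move=> _ _ [a1 [c1 [Ma1 ->]]] [a2 [c2 [Ma2 ->]]].
  pose c1' := mkseq (fun i => c1`_i) (size a1).
  have -> : lin_comb c1 (map f a1) = lin_comb c1' (map f a1).
    by rewrite /lin_comb size_map; apply: eq_bigr => i _; rewrite nth_mkseq.
  exists (a1 ++ a2), (c1' ++ c2); rewrite map_cat lin_comb_cat ?size_mkseq ?size_map //.
  split=> // i; rewrite size_cat nth_cat; case: ifP => [/Ma1 //|/negbT].
  by rewrite -leqNgt => le ilt; apply: Ma2; rewrite ltn_subLR.
- move=> r _ [a [c [Ma ->]]].
  by exists a, [seq r * z | z <- c]; rewrite lin_combZ.
Qed.

Lemma rmorph_lin_comb (R S : comNzRingType) (f : {rmorphism R -> S}) c x :
  f (lin_comb c x) = lin_comb (map f c) (map f x).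
Proof.
rewrite /lin_comb rmorph_sum size_map; apply: eq_bigr => i _.
rewrite rmorphM [(map f x)`_i](nth_map 0) //.
have [ic|ci] := ltnP i (size c); first by rewrite (nth_map 0).
by rewrite nth_default // [(map f c)`_i]nth_default ?size_map // rmorph0 !mul0r.
Qed.

Lemma ideal_ext_comp (R S T : comNzRingType) (f : R -> S) (g : {rmorphism S -> T})
    (M : R -> Prop) z :
  ideal_ext f M z -> ideal_ext (g \o f) M (g z).
Proof.
by case=> [a [c [Ma ->]]]; exists a, (map g c); rewrite rmorph_lin_comb -map_comp.
Qed.

Lemma rmorph_zero_ideal (R S : comNzRingType) (f : {rmorphism R -> S}) z :
  zero_ideal R z -> zero_ideal S (f z).
Proof. by move->; rewrite rmorph0. Qed.

Lemma dimof_eq (P : nat -> Prop) d : P d -> (forall k, P k -> (k <= d)%N) ->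
  dimof P = d.
Proof.
move=> Pd maxd; rewrite /dimof.
have [Pe maxe] := epsilon_spec (inhabits 0%N)
  (fun e => P e /\ forall k, P k -> (k <= e)%N) (ex_intro _ d (conj Pd maxd)).
by apply/eqP; rewrite eqn_leq maxd ?maxe.
Qed.

Lemma local_hom_reflect (R S : comNzRingType) (M : R -> Prop) (N : S -> Prop)
    (f : {rmorphism R -> S}) :
  local_ring M -> local_ring N -> local_hom f M N -> forall a, N (f a) -> M a.
Proof.
move=> [_ _ M_unit] [[_ _ NM] N1 _] _ a Nfa; have [//|Ma] := pselect (M a).
have [b ab] := M_unit a Ma; case: N1.
by rewrite -(rmorph1 f) -ab rmorphM mulrC; apply: NM.
Qed.

Lemma cotan_dim_eq0 (S : comNzRingType) (I N : S -> Prop) :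
  ~ N 1 -> (forall z, N z -> I z) -> cotan_dim I N = 0%N.
Proof.
move=> N1 NI; apply: dimof_eq => [|[//|k] [x [sx Nx indep]]].
  by exists [::]; split=> // c _ i; rewrite ltn0.
have x0 : (0 < size x)%N by rewrite sx.
case: N1; apply: (indep [:: 1] _ 0 x0).
exists 0, x`_0; split; first by exists [::], [::]; rewrite lin_comb0.
  exact/NI/Nx.
rewrite add0r /lin_comb sx big_ord_recl big1 => [|i _]; first by rewrite mul1r addr0.
by rewrite lift0 /= nth_nil mul0r.
Qed.

Lemma cotan_dim_ext_surj (R S : comNzRingType) (M : R -> Prop) (N : S -> Prop)
    (f : {rmorphism R -> S}) :
  local_ring M -> local_ring N -> local_hom f M N -> (forall b, exists a, f a = b) ->
  cotan_dim (ideal_ext f M) N = 0%N.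
Proof.
move=> M_local N_local f_local f_surj; apply: cotan_dim_eq0 => [|z Nz]; first by case: N_local.
have [a fa] := f_surj z; exists [:: a], [:: 1]; split.
  by case=> // _; apply: local_hom_reflect M_local N_local f_local _ _; rewrite fa.
by rewrite /lin_comb /= big_ord1 /= mul1r fa.
Qed.

(** * Row spaces *)

Section RowSpaces.
Variable F : fieldType.

Lemma exists_rowspace d (P : 'rV[F]_d -> Prop) :
  P 0 -> (forall u v, P u -> P v -> P (u + v)) -> (forall a u, P u -> P (a *: u)) ->
  exists K : 'M[F]_d, forall v, (v <= K)%MS <-> P v.
Proof.
move=> P0 PD PZ.
pose good (K : 'M[F]_d) := forall w : 'rV_d, (w <= K)%MS -> P w.
pose good_rank r := `[< exists K, good K /\ \rank K = r >].
have good0 : exists r, good_rank r.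
  exists 0%N; apply/asboolP; exists 0; rewrite mxrank0; split=> // w.
  by rewrite submx0 => /eqP ->.
have good_rank_le r : good_rank r -> (r <= d)%N.
  by move=> /asboolP [K [_ <-]]; apply: rank_leq_row.
have [r /asboolP [K [goodK <-]] maxK] := ex_maxnP good0 good_rank_le.
exists K => v; split; first exact: goodK.
move=> Pv; case: (boolP (v <= K)%MS) => // vK.
have goodKv : good (K + v)%MS.
  move=> w /sub_addsmxP [u ->]; apply: PD; first exact/goodK/submxMl.
  by rewrite [u.2]mx11_scalar mul_scalar_mx; apply: PZ.
have := maxK _ (introT (asboolP _) (ex_intro _ _ (conj goodKv erefl))).
rewrite leqNgt ltn_neqAle; case: (mxrank_leqif_sup (addsmxSl K v)) => -> ->.
by rewrite addsmx_sub submx_refl (negPf vK).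
Qed.

Lemma mxrank_mul_coker m n k (Y : 'M[F]_(m, n)) (K : 'M[F]_(k, n)) :
  \rank (Y *m cokermx K) = (\rank (Y + K)%MS - \rank K)%N.
Proof.
have kerK : (kermx (cokermx K) :=: K)%MS.
  apply/eqmxP/andP; split; first by rewrite submxE mulmx_ker.
  by apply/sub_kermxP; apply: mulmx_coker.
have := mxrank_mul_ker Y (cokermx K); rewrite (cap_eqmx (eqmx_refl Y) kerK).
have := mxrank_sum_cap Y K; lia.
Qed.

Lemma mxrank_mul_coker_adds n k1 k2 k3 k4 (K : 'M[F]_(k1, n)) (K' : 'M[F]_(k2, n))
    (P : 'M[F]_(k3, n)) (G : 'M[F]_(k4, n)) :
  (K' :=: K + G)%MS -> (G <= K + P)%MS ->
  \rank (P *m cokermx K) = (\rank (P *m cokermx K') + \rank (G *m cokermx K))%N.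
Proof.
move=> defK' sG; rewrite !mxrank_mul_coker.
have -> : (P + K' :=: P + K)%MS.
  apply: eqmx_trans (adds_eqmx (eqmx_refl P) defK') _.
  apply/eqmxP/andP; split; last by rewrite addsmxS // addsmxSl.
  by rewrite addsmx_sub addsmxSl addsmx_sub addsmxSr -addsmxC.
rewrite defK' (addsmxC G).
have := mxrankS (addsmxSl K G).
have : (\rank (K + G)%MS <= \rank (P + K)%MS)%N.
  by apply: mxrankS; rewrite addsmx_sub addsmxSr /= addsmxC.
lia.
Qed.

Lemma row_free_col_mxu m1 m2 n (A : 'M[F]_(m1, n)) (B : 'M[F]_(m2, n)) :
  row_free (col_mx A B) -> row_free A.
Proof.
move=> freeAB; apply: inj_row_free => v vA0.
have : row_mx v 0 *m col_mx A B = 0 *m col_mx A B.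
  by rewrite mul_row_col vA0 mul0mx addr0 mul0mx.
by move=> /(row_free_inj freeAB); rewrite -row_mx0 => /eq_row_mx [].
Qed.

Lemma submx_coker_adds m1 m2 m3 n (V : 'M[F]_(m1, n)) (K : 'M[F]_(m2, n)) (B : 'M[F]_(m3, n)) :
  (V *m cokermx K <= B *m cokermx K)%MS -> (V <= K + B)%MS.
Proof.
case/submxP => w VBw; rewrite -(subrK (w *m B) V) addmx_sub_adds ?submxMl //.
by rewrite submxE mulmxBl VBw mulmxA subrr.
Qed.

End RowSpaces.

(** * The residue field *)

Section Residue.
Variables (S : comNzRingType) (N : S -> Prop) (N_local : local_ring N).

(* The unused proof argument keys the canonical ideal structure below on [N_local]. *)
Definition max_pred (_ : local_ring N) : pred S := fun x => `[< N x >].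

Lemma max_pred_idealr : idealr_closed (max_pred N_local).
Proof.
have [[N0 ND NM] N1 _] := N_local; split; first by apply/asboolP.
  by apply/asboolP.
by move=> a u v /asboolP Nu /asboolP Nv; apply/asboolP/ND => //; apply: NM.
Qed.

HB.instance Definition _ := isIdealr.Build S (max_pred N_local) max_pred_idealr.

Definition residue_field := {ideal_quot (max_pred N_local : idealr S)}.
HB.instance Definition _ := GRing.ComNzRing.on residue_field.
Definition residue : S -> residue_field := \pi_(residue_field)%qT.
HB.instance Definition _ := GRing.RMorphism.on residue.

Lemma residue_eq0 x : residue x = 0 <-> N x.
Proof.
have := Quotient.idealrBE (max_pred N_local : idealr S) x 0.
rewrite subr0 -/(residue x) -/(residue 0) rmorph0 => E.
by split=> [/eqP|Nx]; [rewrite -E => /asboolP | apply/eqP; rewrite -E; apply/asboolP].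
Qed.

Lemma reprK_residue (l : residue_field) : residue (repr l) = l.
Proof. exact: reprK. Qed.

Definition unit_inv (x : S) : S := epsilon (inhabits 0) (fun y => x * y = 1).
Definition residue_inv (l : residue_field) : residue_field :=
  if l == 0 then 0 else residue (unit_inv (repr l)).

Lemma residue_mulVf l : l != 0 -> residue_inv l * l = 1.
Proof.
move=> l0; rewrite /residue_inv (negPf l0).
have Nl : ~ N (repr l) by move=> /residue_eq0; rewrite reprK_residue => /eqP; rewrite (negPf l0).
have [_ _ Nunit] := N_local.
have := epsilon_spec (inhabits 0) _ (Nunit _ Nl); rewrite -/(unit_inv _) => lV.
by rewrite -{2}(reprK_residue l) -rmorphM mulrC lV rmorph1.
Qed.

Lemma residue_inv0 : residue_inv 0 = 0.
Proof. by rewrite /residue_inv eqxx. Qed.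

HB.instance Definition _ :=
  GRing.ComNzRing_isField.Build residue_field residue_mulVf residue_inv0.

End Residue.

(** * Coordinates modulo [N^2 + I] *)

Section RowCombinations.
Variable R : comNzRingType.
Implicit Types (c x : seq R).

Definition comb k (u : 'rV[R]_k) x : R := \sum_(i < k) u 0 i * x`_i.
Definition row_of_seq k c : 'rV[R]_k := \row_i c`_i.
Definition seq_of_row k (u : 'rV[R]_k) : seq R := [seq u 0 i | i <- enum 'I_k].

Lemma size_seq_of_row k (u : 'rV[R]_k) : size (seq_of_row u) = k.
Proof. by rewrite size_map size_enum_ord. Qed.

Lemma nth_seq_of_row k (u : 'rV[R]_k) (i : 'I_k) : (seq_of_row u)`_i = u 0 i.
Proof. by rewrite (nth_map i) ?size_enum_ord // nth_ord_enum. Qed.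

Lemma seq_of_rowK k (u : 'rV[R]_k) : row_of_seq k (seq_of_row u) = u.
Proof. by apply/rowP => i; rewrite mxE nth_seq_of_row. Qed.

Lemma lin_comb_row c x : lin_comb c x = comb (row_of_seq (size x) c) x.
Proof. by apply: eq_bigr => i _; rewrite mxE. Qed.

Lemma combD k (u v : 'rV[R]_k) x : comb (u + v) x = comb u x + comb v x.
Proof. by rewrite /comb -big_split; apply: eq_bigr => i _; rewrite mxE mulrDl. Qed.

Lemma combZ k a (u : 'rV[R]_k) x : comb (a *: u) x = a * comb u x.
Proof. by rewrite /comb mulr_sumr; apply: eq_bigr => i _; rewrite mxE mulrA. Qed.

Lemma combB k (u v : 'rV[R]_k) x : comb (u - v) x = comb u x - comb v x.
Proof. by rewrite combD -scaleN1r combZ mulN1r. Qed.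

Lemma comb0 k x : comb (0 : 'rV[R]_k) x = 0.
Proof. by rewrite -(scale0r 0) combZ mul0r. Qed.

Lemma ideal_comb (I : R -> Prop) k (u : 'rV[R]_k) x :
  is_ideal I -> (forall i, (i < k)%N -> I x`_i) -> I (comb u x).
Proof. by move=> I_ideal Ix; apply: ideal_sum => // i; case: I_ideal => _ _ IM; apply/IM/Ix. Qed.

End RowCombinations.

Lemma rmorph_comb (R S : comNzRingType) (f : {rmorphism R -> S}) k (u : 'rV[R]_k) (x : seq R) :
  size x = k -> f (comb u x) = comb (map_mx f u) (map f x).
Proof.
move=> sx; rewrite rmorph_sum; apply: eq_bigr => i _.
by rewrite rmorphM mxE (nth_map 0) // sx.
Qed.


Lemma ideal_det_mul (R : comNzRingType) (J : R -> Prop) n (A : 'M[R]_n) (G : 'cV[R]_n) :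
  is_ideal J -> (forall i, J ((A *m G) i 0)) -> forall i, J (\det A * G i 0).
Proof.
move=> J_ideal AGJ i; have <- : ((\adj A *m A) *m G) i 0 = \det A * G i 0.
  by rewrite mul_adj_mx mul_scalar_mx !mxE.
rewrite -mulmxA mxE; apply: ideal_sum => // l.
by case: J_ideal => _ _ JM; apply: JM.
Qed.

Section Coordinates.
Variables (S : comNzRingType) (N : S -> Prop) (N_local : local_ring N) (g : seq S).
Hypothesis g_gen : forall z, N z <-> exists c, z = lin_comb c g.
Local Notation F := (residue_field N_local).
Local Notation pi := (residue N_local).
Local Notation d := (size g).
Local Notation N_ideal := (local_ring_ideal N_local).

Lemma comb_gen_in (u : 'rV[S]_d) : N (comb u g).
Proof. by apply/g_gen; exists (seq_of_row u); rewrite lin_comb_row seq_of_rowK. Qed.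

Lemma comb_delta (j : 'I_d) : comb (delta_mx 0 j) g = g`_j.
Proof.
rewrite /comb (bigD1 j) //= big1 ?addr0; first by rewrite mxE !eqxx mul1r.
by move=> i ij; rewrite mxE eqxx /= (negPf ij) mul0r.
Qed.

Lemma gen_in j : N g`_j.
Proof.
have [jd|dj] := ltnP j d; first by rewrite -[j]/(nat_of_ord (Ordinal jd)) -comb_delta; apply: comb_gen_in.
by rewrite nth_default //; case: N_ideal.
Qed.

Lemma comb_gen_sq (u : 'rV[S]_d) : (forall j, N (u 0 j)) -> ideal_sq N (comb u g).
Proof.
move=> Nu; exists (seq_of_row u), g; rewrite size_seq_of_row lin_comb_row seq_of_rowK.
split=> //; split=> // i id; rewrite -[i]/(nat_of_ord (Ordinal id)) nth_seq_of_row.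
by split; [apply: Nu | apply: gen_in].
Qed.

Definition coefs (z : S) : 'rV[S]_d :=
  row_of_seq d (epsilon (inhabits [::]) (fun c => z = lin_comb c g)).

Lemma coefsK z : N z -> comb (coefs z) g = z.
Proof. by move=> /g_gen/(epsilon_spec (inhabits [::])); rewrite lin_comb_row => <-. Qed.

Definition coords z : 'rV[F]_d := map_mx pi (coefs z).
Definition coefs_mx k (x : seq S) : 'M[S]_(k, d) := \matrix_(i < k) coefs x`_i.
Definition coords_mx k x : 'M[F]_(k, d) := map_mx pi (coefs_mx k x).

Lemma row_coords_mx k x (i : 'I_k) : row i (coords_mx k x) = coords x`_i.
Proof. by apply/rowP => j; rewrite !mxE. Qed.

Lemma coords_mx_cat k1 k2 x1 x2 : size x1 = k1 ->
  coords_mx (k1 + k2) (x1 ++ x2) = col_mx (coords_mx k1 x1) (coords_mx k2 x2).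
Proof.
move=> <-; apply/matrixP => i j; rewrite !mxE.
by case: splitP => i' ->; rewrite !mxE nth_cat ?ltn_ord // ltnNge leq_addr /= addKn.
Qed.

Lemma comb_coefs_mx k (u : 'rV[S]_k) x : (forall i, (i < k)%N -> N x`_i) ->
  comb u x = comb (u *m coefs_mx k x) g.
Proof.
move=> Nx; rewrite /comb; under [RHS]eq_bigr do rewrite mxE mulr_suml.
rewrite exchange_big /=; apply: eq_bigr => i _.
rewrite -{1}(coefsK (Nx i (ltn_ord i))) /comb mulr_sumr; apply: eq_bigr => j _.
by rewrite mulrA !mxE.
Qed.

Definition repr_mx m n (A : 'M[F]_(m, n)) : 'M[S]_(m, n) := \matrix_(i, j) repr (A i j).

Lemma repr_mxK m n (A : 'M[F]_(m, n)) : map_mx pi (repr_mx A) = A.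
Proof. by apply/matrixP => i j; rewrite !mxE reprK_residue. Qed.

Lemma residue_mx_eq0 m n (u : 'M[S]_(m, n)) : map_mx pi u = 0 -> forall i j, N (u i j).
Proof. by move=> /matrixP u0 i j; have := u0 i j; rewrite !mxE => /residue_eq0. Qed.

Section Relations.
Variable Q : S -> Prop.
Hypotheses (Q_ideal : is_ideal Q) (sq_Q : forall z, ideal_sq N z -> Q z).

Definition relp (v : 'rV[F]_d) := exists u, map_mx pi u = v /\ Q (comb u g).

Lemma relp_comb u : relp (map_mx pi u) <-> Q (comb u g).
Proof.
split=> [[u' [uu' Qu']]|]; last by exists u.
have /sq_Q : ideal_sq N (comb (u - u') g).
  by apply/comb_gen_sq/residue_mx_eq0; rewrite map_mxB uu' subrr.
rewrite combB => Qd; rewrite -(subrK (comb u' g) (comb u g)).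
by case: Q_ideal => _ QD _; apply: QD.
Qed.

(* [relmx Q] spans the residues of the coordinates of the elements of [Q], so
   that [N/Q] is [F^d / relmx Q], onto which [quotmx Q] projects. *)
Definition relmx : 'M[F]_d :=
  epsilon (inhabits 0) (fun K => forall v, (v <= K)%MS <-> relp v).

Lemma relmxP v : (v <= relmx)%MS <-> relp v.
Proof.
have [Q0 QD QM] := Q_ideal.
suff /(epsilon_spec (inhabits 0)) : exists K : 'M[F]_d, forall v, (v <= K)%MS <-> relp v by [].
apply: exists_rowspace.
- by exists 0; rewrite map_mx0 comb0.
- move=> _ _ [u1 [<- Qu1]] [u2 [<- Qu2]].
  by exists (u1 + u2); rewrite map_mxD combD; split=> //; apply: QD.
- move=> a _ [u [<- Qu]]; exists (repr a *: u); rewrite combZ; split; last exact: QM.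
  by rewrite map_mxZ; congr (_ *: _); apply: reprK_residue.
Qed.

Lemma coords_in_relmx z : N z -> Q z -> (coords z <= relmx)%MS.
Proof. by move=> Nz Qz; apply/relmxP; exists (coefs z); rewrite coefsK. Qed.

Definition quotmx := cokermx relmx.
Local Notation E := quotmx.

Lemma Q_comb u : Q (comb u g) <-> map_mx pi u *m E = 0.
Proof. by rewrite -relp_comb -relmxP submxE; split=> [/eqP|->]. Qed.

Lemma coords_comb u : coords (comb u g) *m E = map_mx pi u *m E.
Proof.
apply/eqP; rewrite -subr_eq0 -mulmxBl -map_mxB; apply/eqP/Q_comb.
rewrite combB coefsK ?subrr; [by case: Q_ideal | exact: comb_gen_in].
Qed.

Lemma Q_coords z : N z -> (Q z <-> coords z *m E = 0).
Proof. by move=> Nz; rewrite -{1}(coefsK Nz) Q_comb. Qed.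

Lemma Q_coordsB z z' : N z -> N z' -> (Q (z - z') <-> coords z *m E = coords z' *m E).
Proof.
move=> Nz Nz'; rewrite -(coefsK Nz) -(coefsK Nz') -combB Q_comb map_mxB mulmxBl.
by rewrite !coefsK //; split=> [/eqP|->]; [rewrite subr_eq0 => /eqP | rewrite subrr].
Qed.

Lemma coordsD z z' : N z -> N z' -> coords (z + z') *m E = coords z *m E + coords z' *m E.
Proof.
by move=> Nz Nz'; rewrite -{1}(coefsK Nz) -{1}(coefsK Nz') -combD coords_comb map_mxD mulmxDl.
Qed.

Lemma coordsZ a z : N z -> coords (a * z) *m E = pi a *: (coords z *m E).
Proof. by move=> Nz; rewrite -{1}(coefsK Nz) -combZ coords_comb map_mxZ -scalemxAl. Qed.

Lemma is_ideal_coords_sub m (V : 'M[F]_(m, d)) :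
  is_ideal (fun z => N z /\ (coords z *m E <= V)%MS).
Proof.
have [N0 ND NM] := N_ideal; split.
- by split=> //; rewrite (Q_coords N0).1 ?sub0mx //; case: Q_ideal.
- by move=> z z' [Nz zV] [Nz' z'V]; split; [apply: ND | rewrite coordsD // addmx_sub].
- by move=> a z [Nz zV]; split; [apply: NM | rewrite coordsZ // scalemx_sub].
Qed.

Lemma coords_comb_mx k (u : 'rV[S]_k) x : (forall i, (i < k)%N -> N x`_i) ->
  coords (comb u x) *m E = map_mx pi u *m coords_mx k x *m E.
Proof. by move=> Nx; rewrite comb_coefs_mx // coords_comb map_mxM. Qed.

Lemma coords_mx_gen : coords_mx d g *m E = E.
Proof.
apply/row_matrixP => j; rewrite row_mul row_coords_mx -comb_delta coords_comb.
by rewrite map_delta_mx -rowE.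
Qed.

Lemma lin_indep_modE k x : size x = k -> (forall i, (i < k)%N -> N x`_i) ->
  lin_indep_mod N Q x <-> row_free (coords_mx k x *m E).
Proof.
move=> <- Nx; have Ncomb u := ideal_comb u N_ideal Nx.
split=> [indep|free c].
- apply: inj_row_free => v vxE0.
  have := indep (seq_of_row (repr_mx v)).
  rewrite lin_comb_row seq_of_rowK (Q_coords (Ncomb _)) coords_comb_mx // repr_mxK.
  rewrite -mulmxA vxE0 => /(_ erefl) Nv.
  apply/rowP => j; rewrite mxE -(repr_mxK v) mxE; apply/residue_eq0.
  by have := Nv j (ltn_ord j); rewrite nth_seq_of_row.
- rewrite lin_comb_row (Q_coords (Ncomb _)) coords_comb_mx // -mulmxA => cxE0.
  have /matrixP c0 : map_mx pi (row_of_seq (size x) c) = 0.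
    by apply: (row_free_inj free); rewrite cxE0 mul0mx.
  by move=> i ix; apply/residue_eq0; have := c0 0 (Ordinal ix); rewrite !mxE.
Qed.

Lemma spans_modE k x : size x = k -> (forall i, (i < k)%N -> N x`_i) ->
  (forall z, N z -> exists c, Q (z - lin_comb c x)) <-> (E <= coords_mx k x *m E)%MS.
Proof.
move=> <- Nx; have Ncomb u := ideal_comb u N_ideal Nx.
split=> [spans|sE z Nz].
- apply/row_subP => j; rewrite rowE.
  have [c] := spans _ (comb_gen_in (repr_mx (delta_mx 0 j))).
  rewrite lin_comb_row (Q_coordsB (comb_gen_in _) (Ncomb _)) coords_comb repr_mxK => ->.
  by rewrite coords_comb_mx // -mulmxA submxMl.
- have /submxP [w zw] : (coords z *m E <= coords_mx (size x) x *m E)%MS.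
    exact: submx_trans (submxMl _ _) sE.
  exists (seq_of_row (repr_mx w)).
  by rewrite lin_comb_row seq_of_rowK (Q_coordsB Nz (Ncomb _)) coords_comb_mx // repr_mxK zw mulmxA.
Qed.

Lemma coords_mx_onto k (U : 'M[F]_(k, d)) : exists x,
  [/\ size x = k, (forall i, (i < k)%N -> N x`_i) & coords_mx k x *m E = U *m E].
Proof.
pose x := [seq comb (row i (repr_mx U)) g | i <- enum 'I_k].
have nth_x (i : 'I_k) : x`_i = comb (row i (repr_mx U)) g.
  by rewrite (nth_map i) ?size_enum_ord // nth_ord_enum.
exists x; split; first by rewrite size_map size_enum_ord.
  by move=> i ik; rewrite -[i]/(nat_of_ord (Ordinal ik)) nth_x; apply: comb_gen_in.
apply/row_matrixP => i; rewrite !row_mul row_coords_mx nth_x coords_comb.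
by rewrite map_row repr_mxK.
Qed.

End Relations.

Lemma relmx_sub (Q Q' : S -> Prop) : is_ideal Q -> is_ideal Q' ->
  (forall z, Q z -> Q' z) -> (relmx Q <= relmx Q')%MS.
Proof.
move=> Q_ideal Q'_ideal QQ'; apply/row_subP => i; apply/(relmxP Q'_ideal).
by have [u [<- /QQ' Q'u]] := (relmxP Q_ideal _).1 (row_sub i (relmx Q)); exists u.
Qed.

Lemma nakayama (J : S -> Prop) : is_ideal J ->
  (forall z, N z -> exists u v, [/\ J u, ideal_sq N v & z = u + v]) ->
  forall z, N z -> J z.
Proof.
move=> J_ideal N_JN2.
pose good (j : 'I_d) (r : 'rV[S]_d) := (forall l, N (r 0 l)) /\ J (g`_j - comb r g).
have good_ex j : exists r, good j r.
  have [u [v [Ju [a [b [sab [Nab ->]]]] gj]]] := N_JN2 _ (gen_in j).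
  have Nb i : (i < size b)%N -> N b`_i by rewrite -sab => /Nab [].
  exists (row_of_seq (size b) a *m coefs_mx (size b) b); split.
    move=> l; rewrite mxE; apply: ideal_sum => [|i]; first exact: N_ideal.
    rewrite mxE mulrC; case: N_ideal => _ _ NM; apply: NM.
    by case: (Nab i); rewrite ?sab.
  by rewrite -comb_coefs_mx // -lin_comb_row gj addrK.
have [w Nw Jw] : exists2 w : 'M[S]_d,
    forall j l, N (w j l) & forall j : 'I_d, J (g`_j - comb (row j w) g).
  exists (\matrix_j epsilon (inhabits 0) (good j)) => [j l|j];
    have [] := epsilon_spec (inhabits 0) _ (good_ex j); rewrite ?rowK //.
  by rewrite mxE => /(_ l).
(* Determinant trick: [(1 - w) g = 0] modulo [J], and [det (1 - w)] is a unit. *)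
pose A : 'M[S]_d := 1%:M - w.
have AgJ j : J ((A *m \col_l g`_l) j 0).
  suff -> : (A *m \col_l g`_l) j 0 = g`_j - comb (row j w) g by [].
  rewrite mulmxBl mul1mx !mxE; congr (_ - _).
  by apply: eq_bigr => l _; rewrite !mxE.
have detA_unit : ~ N (\det A).
  move=> /(residue_eq0 N_local); rewrite -det_map_mx map_mxB map_mx1.
  have -> : map_mx pi w = 0 by apply/matrixP => j l; rewrite !mxE; apply/residue_eq0/Nw.
  by rewrite subr0 det1 => /eqP; rewrite oner_eq0.
have [_ _ N_unit] := N_local; have [y detAy] := N_unit _ detA_unit.
have gJ j : (j < d)%N -> J g`_j.
  move=> jd; have := ideal_det_mul J_ideal AgJ (Ordinal jd); rewrite mxE => /= detAg.
  have -> : g`_j = y * (\det A * g`_j) by rewrite mulrA (mulrC y) detAy mul1r.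
  by case: J_ideal => _ _ JM; apply: JM.
by move=> z /g_gen [c ->]; apply: ideal_lin_comb.
Qed.

Section Cotangent.
Variable I : S -> Prop.
Hypothesis I_ideal : is_ideal I.
Local Notation Q := (ideal_add (ideal_sq N) I).
Local Notation E := (quotmx Q).

Let Q_ideal : is_ideal Q := is_ideal_sq_add N_local I_ideal.
Let sq_Q : forall z, ideal_sq N z -> Q z := ideal_addl I_ideal.

Lemma generatesE k x : size x = k -> generates I N x <->
  (forall i, (i < k)%N -> N x`_i) /\ (E <= coords_mx k x *m E)%MS.
Proof.
move=> sx; split=> [[Nx xgen]|[Nx sE]].
- rewrite -sx in Nx *; split=> //; apply/(spans_modE Q_ideal sq_Q erefl Nx) => z Nz.
  have [c Ic] := xgen z Nz; exists c; exists 0, (z - lin_comb c x); rewrite add0r.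
  by split=> //; case: (is_ideal_sq N_ideal).
rewrite -sx in Nx sE; split=> //.
have xspans := (spans_modE Q_ideal sq_Q erefl Nx).2 sE.
pose J z := exists c, I (z - lin_comb c x).
have J_ideal : is_ideal J.
  have [I0 ID IM] := I_ideal; split.
  - by exists [::]; rewrite lin_comb0 subrr.
  - move=> a b [c1 Ia] [c2 Ib].
    exists (seq_of_row (row_of_seq (size x) c1 + row_of_seq (size x) c2)).
    by rewrite lin_comb_row seq_of_rowK combD -!lin_comb_row opprD addrACA; apply: ID.
  - move=> r a [c Ia]; exists (seq_of_row (r *: row_of_seq (size x) c)).
    by rewrite lin_comb_row seq_of_rowK combZ -lin_comb_row -mulrBr; apply: IM.
apply: nakayama J_ideal _ => z Nz.
have [c [u [v [sq_u Iv zxuv]]]] := xspans z Nz.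
exists (lin_comb c x + v), u; split=> //; first by exists c; rewrite addrC addKr.
by rewrite -addrA (addrC v) -zxuv addrC subrK.
Qed.

Lemma rank_le_generates x : generates I N x -> (\rank E <= size x)%N.
Proof.
move=> /(generatesE erefl) [_ sE].
exact: leq_trans (mxrankS sE) (rank_leq_row _).
Qed.

Lemma exists_cotan_basis : exists x, [/\ size x = \rank E,
  (forall i, (i < \rank E)%N -> N x`_i) & coords_mx (\rank E) x *m E = row_base E].
Proof.
have [x [sx Nx xE]] := coords_mx_onto Q_ideal sq_Q (row_base E *m pinvmx E).
by exists x; split=> //; rewrite xE mulmxKpV // eq_row_base.
Qed.

Lemma min_basisE k x : size x = k -> min_basis I N x <->
  [/\ (forall i, (i < k)%N -> N x`_i), row_free (coords_mx k x *m E) & k = \rank E].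
Proof.
move=> sx; have [x0 [sx0 Nx0 x0E]] := exists_cotan_basis.
have x0gen : generates I N x0.
  by apply/(generatesE sx0); split=> //; rewrite x0E eq_row_base.
split=> [[xgen xmin]|[Nx xfree kE]].
- have kE : k = \rank E.
    have := rank_le_generates xgen; have := xmin _ x0gen; rewrite sx sx0 => le1 le2.
    by apply/eqP; rewrite eqn_leq le1 le2.
  have [Nx sE] := (generatesE sx).1 xgen; split=> //.
  by rewrite /row_free eqn_leq rank_leq_row /= {1}kE mxrankS.
split=> [|x' x'gen]; last by rewrite sx kE; apply: rank_le_generates.
apply/(generatesE sx); split=> //.
have [_ <-] := mxrank_leqif_sup (submxMl (coords_mx k x) E).
by move: xfree; rewrite /row_free => /eqP ->; rewrite kE.
Qed.

Lemma exists_min_basis : exists x, min_basis I N x.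
Proof.
have [x [sx Nx xE]] := exists_cotan_basis.
by exists x; apply/(min_basisE sx); rewrite xE row_base_free.
Qed.

Lemma cotan_dimE : cotan_dim I N = \rank E.
Proof.
apply: dimof_eq => [|k [x [sx Nx]]].
  have [x [sx Nx xE]] := exists_cotan_basis.
  by exists x; split=> //; apply/(lin_indep_modE Q_ideal sq_Q sx Nx); rewrite xE row_base_free.
move=> /(lin_indep_modE Q_ideal sq_Q sx Nx); rewrite /row_free => /eqP <-.
exact/mxrankS/submxMl.
Qed.

End Cotangent.
End Coordinates.

(** * Local homomorphisms *)

Section LocalMap.
Variables (R S : comNzRingType) (M : R -> Prop) (N : S -> Prop).
Hypotheses (M_local : local_ring M) (N_local : local_ring N).
Variables (gR : seq R) (gS : seq S).
Hypotheses (gR_gen : forall z, M z <-> exists c, z = lin_comb c gR)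
  (gS_gen : forall z, N z <-> exists c, z = lin_comb c gS).
Variable f : {rmorphism R -> S}.
Hypothesis f_local : local_hom f M N.

Local Notation cR := (coords_mx M_local gR).
Local Notation cS := (coords_mx N_local gS).
Local Notation ER := (quotmx M_local gR).
Local Notation ES := (quotmx N_local gS).
Local Notation imgmx := (cS (size gR) (map f gR)).
Local Notation M_ideal := (local_ring_ideal M_local).
Local Notation N_ideal := (local_ring_ideal N_local).

Lemma map_in k x : size x = k -> (forall i, (i < k)%N -> M x`_i) ->
  forall i, (i < k)%N -> N (map f x)`_i.
Proof. by move=> sx Mx i ik; rewrite (nth_map 0) ?sx //; apply/f_local/Mx. Qed.

Lemma ideal_sq_map z : ideal_sq M z -> ideal_sq N (f z).
Proof.
move=> [a [b [sab [Mab ->]]]]; exists (map f a), (map f b).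
rewrite !size_map rmorph_lin_comb; split=> //; split=> // i ia.
by rewrite !(nth_map 0) -?sab //; have [Ma Mb] := Mab i ia; split; apply: f_local.
Qed.

Lemma cotan_rel_map (I : R -> Prop) (J : S -> Prop) : (forall z, I z -> J (f z)) ->
  forall z, ideal_add (ideal_sq M) I z -> ideal_add (ideal_sq N) J (f z).
Proof.
move=> IJ _ [u [v [sq_u Iv ->]]]; exists (f u), (f v); rewrite rmorphD.
by split; [apply: ideal_sq_map | apply: IJ |].
Qed.

Section Transfer.
Variables (QR : R -> Prop) (QS : S -> Prop).
Hypotheses (QR_ideal : is_ideal QR) (sq_QR : forall z, ideal_sq M z -> QR z).
Hypotheses (QS_ideal : is_ideal QS) (sq_QS : forall z, ideal_sq N z -> QS z).
Hypothesis QRS : forall z, QR z -> QS (f z).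

Lemma coords_mx_map_sub k r x z : size x = k -> size z = r ->
  (forall i, (i < k)%N -> M x`_i) -> (forall i, (i < r)%N -> M z`_i) ->
  (cR k x *m ER QR <= cR r z *m ER QR)%MS ->
  (cS k (map f x) *m ES QS <= cS r (map f z) *m ES QS)%MS.
Proof.
move=> sx sz Mx Mz /row_subP xz; apply/row_subP => i.
have /submxP [w xiw] := xz i; rewrite row_mul row_coords_mx in xiw.
have Mxi : M x`_i := Mx i (ltn_ord i).
have Mc : M (comb (repr_mx w) z) := ideal_comb _ M_ideal Mz.
have /QRS : QR (x`_i - comb (repr_mx w) z).
  apply/(Q_coordsB M_local gR_gen QR_ideal sq_QR Mxi Mc).
  by rewrite coords_comb_mx // repr_mxK xiw mulmxA.
have Nfz := map_in sz Mz.
rewrite rmorphB rmorph_comb //.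
rewrite (Q_coordsB N_local gS_gen QS_ideal sq_QS (f_local Mxi) (ideal_comb _ N_ideal Nfz)).
rewrite row_mul row_coords_mx (nth_map 0) ?sx // => ->.
by rewrite coords_comb_mx // -mulmxA submxMl.
Qed.

Lemma rank_coords_mx_map k x : size x = k -> (forall i, (i < k)%N -> M x`_i) ->
  (\rank (cS k (map f x) *m ES QS) <= \rank (cR k x *m ER QR))%N.
Proof.
move=> sx Mx; set B := row_base (cR k x *m ER QR).
have [z [sz Mz zE]] := coords_mx_onto (N_local := M_local) gR_gen QR_ideal sq_QR (B *m pinvmx (ER QR)).
rewrite mulmxKpV in zE; last by rewrite eq_row_base submxMl.
have xz : (cR k x *m ER QR <= cR (\rank (cR k x *m ER QR)) z *m ER QR)%MS.
  by rewrite zE eq_row_base.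
have /mxrankS := coords_mx_map_sub sx sz Mx Mz xz.
by move/leq_trans; apply; apply: rank_leq_row.
Qed.

End Transfer.

Section CotangentMap.
Variables (I : R -> Prop) (J : S -> Prop).
Hypotheses (I_ideal : is_ideal I) (J_ideal : is_ideal J) (IJ : forall z, I z -> J (f z)).
Local Notation QR := (ideal_add (ideal_sq M) I).
Local Notation QS := (ideal_add (ideal_sq N) J).

Let QR_ideal : is_ideal QR := is_ideal_sq_add M_local I_ideal.
Let QS_ideal : is_ideal QS := is_ideal_sq_add N_local J_ideal.
Let sq_QR : forall z, ideal_sq M z -> QR z := ideal_addl I_ideal.
Let sq_QS : forall z, ideal_sq N z -> QS z := ideal_addl J_ideal.
Let gR_in i : (i < size gR)%N -> M gR`_i := fun _ => gen_in M_local gR_gen i.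

Lemma image_dimE : image_dim f M J N = \rank (imgmx *m ES QS).
Proof.
have indepE k x (sx : size x = k) Mx := lin_indep_modE N_local gS_gen QS_ideal sq_QS
  (etrans (size_map f x) sx) (map_in sx Mx).
apply: dimof_eq => [|k [x [sx Mx]]].
- set r := \rank _; pose h := maxrankfun (imgmx *m ES QS).
  pose x := [seq gR`_(h i) | i <- enum 'I_r].
  have nth_x (i : 'I_r) : x`_i = gR`_(h i) by rewrite (nth_map i) ?size_enum_ord // nth_ord_enum.
  have sx : size x = r by rewrite size_map size_enum_ord.
  have Mx i : (i < r)%N -> M x`_i.
    by move=> ir; rewrite -[i]/(nat_of_ord (Ordinal ir)) nth_x; apply/gR_in/ltn_ord.
  exists x; split=> //; apply/(indepE _ _ sx Mx).
  suff -> : cS r (map f x) *m ES QS = rowsub h (imgmx *m ES QS) by apply: maxrowsub_free.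
  apply/row_matrixP => i; rewrite row_rowsub !row_mul !row_coords_mx.
  by rewrite (nth_map 0) ?sx // nth_x (nth_map 0).
- move/(indepE _ _ sx Mx); rewrite /row_free => /eqP <-; apply: mxrankS.
  apply: (coords_mx_map_sub (is_ideal_sq M_ideal) (fun _ sq_z => sq_z) QS_ideal sq_QS _ sx erefl Mx).
  + by move=> z /ideal_sq_map; apply: sq_QS.
  + exact: gR_in.
  by rewrite (coords_mx_gen M_local gR_gen (is_ideal_sq M_ideal)) // submxMl.
Qed.

Lemma generates_imgmx x : generates I M x ->
  (imgmx *m ES QS :=: cS (size x) (map f x) *m ES QS)%MS.
Proof.
move=> /(generatesE M_local gR_gen I_ideal erefl) [Mx sE].
have transfer := coords_mx_map_sub QR_ideal sq_QR QS_ideal sq_QS (cotan_rel_map IJ).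
rewrite -{1}(coords_mx_gen M_local gR_gen QR_ideal sq_QR) in sE.
apply/eqmxP/andP; split.
  exact: transfer erefl erefl gR_in Mx sE.
by apply: transfer erefl erefl Mx gR_in _; rewrite coords_mx_gen ?submxMl.
Qed.

Lemma basically_regular_rank :
  basically_regular f I M J N <-> \rank (imgmx *m ES QS) = \rank (ER QR).
Proof.
have min_basisRE := min_basisE M_local gR_gen I_ideal.
split=> [freg|rankE x xmin].
- have [x xmin] := exists_min_basis M_local gR_gen I_ideal.
  have [_ _ xE] := (min_basisRE _ _ erefl).1 xmin.
  have [y xymin] := freg x xmin.
  have sxy : size (map f x ++ y) = (size x + size y)%N by rewrite size_cat size_map.
  have [_ +] := (min_basisE N_local gS_gen J_ideal sxy).1 xymin.
  rewrite (coords_mx_cat N_local gS _ _ (size_map _ _)) mul_col_mx => /row_free_col_mxu.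
  by rewrite /row_free -(generates_imgmx xmin.1) => /eqP ->.
have [Mx _ xE] := (min_basisRE _ _ erefl).1 xmin.
set Y := cS (size x) (map f x); set E := ES QS.
have rankY : \rank (Y *m E) = size x by rewrite -(generates_imgmx xmin.1) rankE xE.
set D := (E :\: Y *m E)%MS.
have [y [sy Ny yE]] := coords_mx_onto (N_local := N_local) gS_gen QS_ideal sq_QS (row_base D *m pinvmx E).
rewrite mulmxKpV in yE; last by rewrite eq_row_base diffmxSl.
exists y; have sxy : size (map f x ++ y) = (size x + \rank D)%N by rewrite size_cat size_map sy.
apply/(min_basisE N_local gS_gen J_ideal sxy); split.
- move=> i; rewrite nth_cat size_map; case: ifP => [xi _|/negbT]; first exact: map_in.
  by rewrite -leqNgt => xi ilt; apply: Ny; rewrite ltn_subLR.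
- rewrite (coords_mx_cat N_local gS _ _ (size_map _ _)) mul_col_mx -/Y -/E yE.
  rewrite /row_free -addsmxE mxrank_disjoint_sum; first by rewrite rankY (eq_row_base D).
  apply/eqP; rewrite -submx0 (cap_eqmx (eqmx_refl _) (eq_row_base D)) capmxC capmx_diff.
  exact: submx_refl.
- have := mxrank_cap_compl E (Y *m E).
  by rewrite (capmx_idPr (submxMl Y E)) rankY.
Qed.

Lemma image_rank_le_cotan : (\rank (imgmx *m ES QS) <= \rank (ER QR))%N.
Proof.
have := rank_coords_mx_map QR_ideal sq_QR QS_ideal sq_QS (cotan_rel_map IJ) erefl gR_in.
by rewrite (coords_mx_gen M_local gR_gen QR_ideal sq_QR).
Qed.

End CotangentMap.

Lemma relmx_ext :
  (relmx N_local gS (ideal_add (ideal_sq N) (ideal_ext f M)) :=: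
   relmx N_local gS (ideal_add (ideal_sq N) (zero_ideal S)) + imgmx)%MS.
Proof.
set Q0 := ideal_add (ideal_sq N) (zero_ideal S).
set Qm := ideal_add (ideal_sq N) (ideal_ext f M).
have Q0_ideal : is_ideal Q0 := is_ideal_sq_add N_local (is_ideal_zero S).
have Qm_ideal : is_ideal Qm := is_ideal_sq_add N_local (is_ideal_ext f M).
have sq_Q0 : forall z, ideal_sq N z -> Q0 z := ideal_addl (is_ideal_zero S).
have fgR_in := map_in (erefl (size gR)) (fun i _ => gen_in M_local gR_gen i).
apply/eqmxP/andP; split.
- apply/row_subP => i; have [u [<- [s [t [sq_s ext_t Qm_u]]]]] :=
    (relmxP Qm_ideal _).1 (row_sub i (relmx N_local gS Qm)).
  apply: submx_coker_adds; rewrite -[cokermx _]/(quotmx N_local gS Q0).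
  rewrite -(coords_comb N_local gS_gen Q0_ideal sq_Q0) Qm_u.
  (* The elements of [N] whose classes modulo [N^2] lie in the image of [f] form
     an ideal containing [N^2 + f(M)S]. *)
  pose T z := N z /\ (coords N_local gS z *m ES Q0 <= imgmx *m ES Q0)%MS.
  have T_ideal : is_ideal T := is_ideal_coords_sub gS_gen Q0_ideal sq_Q0 (imgmx *m ES Q0).
  have Ns := ideal_sq_sub N_ideal sq_s.
  have Ts : T s.
    by split=> //; rewrite (Q_coords N_local gS_gen Q0_ideal sq_Q0 Ns).1 ?sub0mx //; apply: sq_Q0.
  suff Tt : T t by have [_ TD _] := T_ideal; have [] := TD s t Ts Tt.
  have [a [c [Ma ->]]] := ext_t; apply: ideal_lin_comb => //.
  rewrite size_map => j ja; rewrite (nth_map 0) //.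
  have [c' ->] := (gR_gen _).1 (Ma j ja); split; first by apply/f_local/gR_gen; exists c'.
  rewrite rmorph_lin_comb lin_comb_row size_map.
  by rewrite (coords_comb_mx N_local gS_gen Q0_ideal sq_Q0 _ fgR_in) -mulmxA submxMl.
- rewrite addsmx_sub relmx_sub //=; last first.
    by move=> _ [s [t [sq_s -> ->]]]; exists s, 0; split=> //; case: (is_ideal_ext f M).
  apply/row_subP => i; rewrite row_coords_mx; apply: (coords_in_relmx N_local gS_gen Qm_ideal).
    exact: fgR_in.
  exists 0, (map f gR)`_i; rewrite add0r; split=> //; first by case: (is_ideal_sq N_ideal).
  exists [:: gR`_i], [:: 1]; split; first by case=> [_|//]; apply: (gen_in M_local gR_gen).
  by rewrite /lin_comb /= big_ord1 /= mul1r (nth_map 0).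
Qed.

End LocalMap.

(** * Noetherian local rings *)

Section NoetherianLocalRings.
Variables (R S T : comNzRingType) (M : R -> Prop) (N : S -> Prop) (P : T -> Prop).
Hypotheses (R_noeth : noetherian R) (S_noeth : noetherian S) (T_noeth : noetherian T).
Hypotheses (M_local : local_ring M) (N_local : local_ring N) (P_local : local_ring P).
Variables (f : {rmorphism R -> S}) (g : {rmorphism S -> T}).
Hypotheses (f_local : local_hom f M N) (g_local : local_hom g N P).

Let gf_local : local_hom (g \o f) M P := fun z Mz => g_local (f_local Mz).

Lemma basically_regularE (I : R -> Prop) (J : S -> Prop) :
  is_ideal I -> is_ideal J -> (forall z, I z -> J (f z)) ->
  basically_regular f I M J N = (image_dim f M J N = cotan_dim I M).
Proof.
move=> I_ideal J_ideal IJ.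
have [gR gR_gen] := R_noeth (local_ring_ideal M_local).
have [gS gS_gen] := S_noeth (local_ring_ideal N_local).
rewrite (image_dimE M_local N_local gR_gen gS_gen f_local J_ideal).
rewrite (cotan_dimE M_local gR_gen I_ideal).
exact/propext/(basically_regular_rank M_local N_local gR_gen gS_gen f_local I_ideal J_ideal IJ).
Qed.

Lemma image_dim_le_cotan (I : R -> Prop) (J : S -> Prop) :
  is_ideal I -> is_ideal J -> (forall z, I z -> J (f z)) ->
  (image_dim f M J N <= cotan_dim I M)%N.
Proof.
move=> I_ideal J_ideal IJ.
have [gR gR_gen] := R_noeth (local_ring_ideal M_local).
have [gS gS_gen] := S_noeth (local_ring_ideal N_local).
rewrite (image_dimE M_local N_local gR_gen gS_gen f_local J_ideal).
rewrite (cotan_dimE M_local gR_gen I_ideal).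
exact: (image_rank_le_cotan M_local N_local gR_gen gS_gen f_local I_ideal J_ideal IJ).
Qed.

Lemma image_dim_comp_le (J : S -> Prop) (J' : T -> Prop) :
  is_ideal J -> is_ideal J' -> (forall z, J z -> J' (g z)) ->
  (image_dim (g \o f) M J' P <= image_dim f M J N)%N.
Proof.
move=> J_ideal J'_ideal JJ'.
have [gR gR_gen] := R_noeth (local_ring_ideal M_local).
have [gS gS_gen] := S_noeth (local_ring_ideal N_local).
have [gT gT_gen] := T_noeth (local_ring_ideal P_local).
rewrite (image_dimE M_local N_local gR_gen gS_gen f_local J_ideal).
rewrite (image_dimE M_local P_local gR_gen gT_gen gf_local J'_ideal) map_comp.
apply: (rank_coords_mx_map N_local P_local gS_gen gT_gen g_local
  (is_ideal_sq_add N_local J_ideal) (ideal_addl J_ideal)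
  (is_ideal_sq_add P_local J'_ideal) (ideal_addl J'_ideal) (cotan_rel_map g_local JJ')).
  exact: size_map.
exact: (map_in f_local (erefl (size gR)) (fun i _ => gen_in M_local gR_gen i)).
Qed.

Lemma image_dim_id (J : S -> Prop) : is_ideal J -> image_dim id N J N = cotan_dim J N.
Proof.
move=> J_ideal; have [gS gS_gen] := S_noeth (local_ring_ideal N_local).
rewrite (cotan_dimE N_local gS_gen J_ideal).
rewrite -[image_dim _ _ _ _]/(image_dim (idfun : {rmorphism S -> S}) N J N).
rewrite (image_dimE N_local N_local gS_gen gS_gen (f := idfun) (fun _ Nz => Nz) J_ideal) map_id.
by rewrite (coords_mx_gen N_local gS_gen (is_ideal_sq_add N_local J_ideal) (ideal_addl J_ideal)).
Qed.

Lemma image_dim_ext :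
  image_dim g N (zero_ideal T) P =
  (image_dim g N (ideal_ext (g \o f) M) P + image_dim (g \o f) M (zero_ideal T) P)%N.
Proof.
have [gR gR_gen] := R_noeth (local_ring_ideal M_local).
have [gS gS_gen] := S_noeth (local_ring_ideal N_local).
have [gT gT_gen] := T_noeth (local_ring_ideal P_local).
rewrite (image_dimE N_local P_local gS_gen gT_gen g_local (is_ideal_zero T)).
rewrite (image_dimE M_local P_local gR_gen gT_gen gf_local (is_ideal_zero T)).
rewrite (image_dimE N_local P_local gS_gen gT_gen g_local (is_ideal_ext (g \o f) M)).
apply: mxrank_mul_coker_adds; first exact: (relmx_ext M_local P_local gR_gen gT_gen gf_local).
apply: submx_coker_adds; rewrite map_comp.
have QS0_ideal := is_ideal_sq_add N_local (is_ideal_zero S).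
have QT0_ideal := is_ideal_sq_add P_local (is_ideal_zero T).
apply: (coords_mx_map_sub (M_local := N_local) P_local gS_gen gT_gen g_local
  QS0_ideal (ideal_addl (is_ideal_zero S)) QT0_ideal (ideal_addl (is_ideal_zero T))
  (cotan_rel_map g_local (@rmorph_zero_ideal _ _ g)) (size_map f gR) erefl).
- exact: (map_in f_local (erefl (size gR)) (fun i _ => gen_in M_local gR_gen i)).
- by move=> i _; apply: (gen_in N_local gS_gen).
by rewrite (coords_mx_gen N_local gS_gen QS0_ideal (ideal_addl (is_ideal_zero S))) submxMl.
Qed.

End NoetherianLocalRings.

Lemma cotan_dim_ext (R S : comNzRingType) (M : R -> Prop) (N : S -> Prop)
    (f : {rmorphism R -> S}) :
  noetherian R -> noetherian S -> local_ring M -> local_ring N -> local_hom f M N ->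
  cotan_dim (zero_ideal S) N = (cotan_dim (ideal_ext f M) N + image_dim f M (zero_ideal S) N)%N.
Proof.
move=> R_noeth S_noeth M_local N_local f_local.
rewrite -(image_dim_id S_noeth N_local (is_ideal_zero S)).
rewrite -(image_dim_id S_noeth N_local (is_ideal_ext f M)).
exact: (image_dim_ext R_noeth S_noeth S_noeth M_local N_local N_local f_local
  (g := idfun) (fun _ Nz => Nz)).
Qed.

Theorem corollary3p11 (A B C : comNzRingType)
  (m : A -> Prop) (n : B -> Prop) (q : C -> Prop)
  (phi : {rmorphism A -> B}) (psi : {rmorphism B -> C}) :
  noetherian A -> noetherian B -> noetherian C ->
  local_ring m -> local_ring n -> local_ring q ->
  local_hom phi m n -> local_hom psi n q ->
  let psiphi := (psi \o phi)%FUN in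
  let mB := ideal_ext phi m in
  let mC := ideal_ext psiphi m in
  (* (1) *)
  ((basically_regular psiphi (zero_ideal A) m (zero_ideal C) q <->
      basically_regular phi (zero_ideal A) m (zero_ideal B) n /\
      reg_defect psi (zero_ideal B) n (zero_ideal C) q = reg_defect psi mB n mC q)
   /\
   (basically_regular psiphi (zero_ideal A) m (zero_ideal C) q <->
      basically_regular phi (zero_ideal A) m (zero_ideal B) n /\
      reg_defect id (zero_ideal B) n mB n = reg_defect id (zero_ideal C) q mC q))
  /\
  (* (2) *)
  (basically_regular psi (zero_ideal B) n (zero_ideal C) q <->
     basically_regular psi mB n mC q /\
     reg_defect psiphi (zero_ideal A) m (zero_ideal C) q =
     reg_defect phi (zero_ideal A) m (zero_ideal B) n)
  /\
  (* (3) *)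
  (basically_regular phi (zero_ideal A) m (zero_ideal B) n ->
   basically_regular psi (zero_ideal B) n (zero_ideal C) q ->
   basically_regular psiphi (zero_ideal A) m (zero_ideal C) q)
  /\
  (* (4) *)
  ((forall b, exists a, phi a = b) ->
   basically_regular psiphi (zero_ideal A) m (zero_ideal C) q ->
   basically_regular phi (zero_ideal A) m (zero_ideal B) n /\
   basically_regular psi (zero_ideal B) n (zero_ideal C) q).
Proof.
move=> A_noeth B_noeth C_noeth m_local n_local q_local phi_local psi_local /=.
have psiphi_local : local_hom (psi \o phi) m q := fun z mz => psi_local _ (phi_local z mz).
have mB_mC := @ideal_ext_comp _ _ _ phi psi m.
have IA := is_ideal_zero A; have IB := is_ideal_zero B; have IC := is_ideal_zero C.
have ImB := is_ideal_ext phi m; have ImC := is_ideal_ext (psi \o phi) m.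
rewrite (basically_regularE A_noeth B_noeth m_local n_local phi_local IA IB (rmorph_zero_ideal phi)).
rewrite (basically_regularE A_noeth C_noeth m_local q_local psiphi_local IA IC (rmorph_zero_ideal _)).
rewrite (basically_regularE B_noeth C_noeth n_local q_local psi_local IB IC (rmorph_zero_ideal psi)).
rewrite (basically_regularE B_noeth C_noeth n_local q_local psi_local ImB ImC mB_mC).
rewrite /reg_defect (image_dim_id B_noeth n_local ImB) (image_dim_id C_noeth q_local ImC).
have := cotan_dim_ext A_noeth B_noeth m_local n_local phi_local.
have := cotan_dim_ext A_noeth C_noeth m_local q_local psiphi_local.
have := image_dim_ext A_noeth B_noeth C_noeth m_local n_local q_local phi_local psi_local.
have := image_dim_comp_le A_noeth B_noeth C_noeth m_local n_local q_local phi_local psi_local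
  IB IC (rmorph_zero_ideal psi).
have := image_dim_le_cotan A_noeth B_noeth m_local n_local phi_local IA IB (rmorph_zero_ideal phi).
have := image_dim_le_cotan B_noeth C_noeth n_local q_local psi_local IB IC (rmorph_zero_ideal psi).
have := image_dim_le_cotan B_noeth C_noeth n_local q_local psi_local ImB ImC mB_mC.
have := cotan_dim_ext_surj m_local n_local phi_local.
rewrite /= => surj_edim *.
by split; [lia | split; [lia | split; [lia | move=> /surj_edim; lia]]].
Qed.
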